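(* Let $R$ be a t-unital ring and $f\colon L\to M$ a morphism of left $R$-modules whose kernel and cokernel are null-modules. Then (a) the morphism $R\otimes_R f\colon R\otimes_R L\to R\otimes_R M$ is an isomorphism; (b) the morphism $\mathrm{Hom}_R(R,f)\colon \mathrm{Hom}_R(R,L)\to\mathrm{Hom}_R(R,M)$ is an isomorphism.
   Context: Rings are associative, not necessarily unital; modules are not assumed unital. $R$ is t-unital if the multiplication map $R\otimes_R R\to R$ is an isomorphism. A left $R$-module $N$ is a null-module if $rn=0$ for all $r\in R$, $n\in N$. $\mathrm{Hom}_R$ denotes left $R$-module homomorphisms; $\mathrm{Hom}_R(R,L)$ is a left $R$-module via the right action of $R$ on itself. *)

(* Non-unital rings and non-unital modules are encoded as
   zmodTypes equipped with operations satisfying explicit axioms. *)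
From mathcomp Require Import all_boot all_algebra.
Set Implicit Arguments. Unset Strict Implicit. Unset Printing Implicit Defensive.
Import GRing.Theory.
Local Open Scope ring_scope.

Definition nu_ring (R : zmodType) (mul : R -> R -> R) : Prop :=
  [/\ forall a b c, mul a (mul b c) = mul (mul a b) c,
      forall a b c, mul (a + b) c = mul a c + mul b c &
      forall a b c, mul a (b + c) = mul a b + mul a c].

Definition lmodule (R M : zmodType) (mul : R -> R -> R) (act : R -> M -> M) : Prop :=
  [/\ forall r m m', act r (m + m') = act r m + act r m',
      forall r r' m, act (r + r') m = act r m + act r' m &
      forall r s m, act (mul r s) m = act r (act s m)].

Definition lmod_hom (R L M : zmodType) (actL : R -> L -> L) (actM : R -> M -> M)
  (f : L -> M) : Prop :=
  (forall x y, f (x + y) = f x + f y) /\ (forall r x, f (actL r x) = actM r (f x)).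

Definition null_kernel (R L M : zmodType) (actL : R -> L -> L) (f : L -> M) : Prop :=
  forall r x, f x = 0 -> actL r x = 0.

Definition null_cokernel (R L M : zmodType) (actM : R -> M -> M) (f : L -> M) : Prop :=
  forall r y, exists x, f x = actM r y.

(* ---- The tensor product R (x)_R N, R viewed as a right R-module via mul. ----
   Presented as the free abelian group on R x N (terms modulo the abelian group
   axioms) modulo bilinearity and balancedness relations. *)
Inductive tterm (R N : Type) : Type :=
| TZero
| TGen of R & N
| TAdd of tterm R N & tterm R N
| TOpp of tterm R N.
Arguments TZero {R N}.

Inductive teq (R N : zmodType) (mul : R -> R -> R) (act : R -> N -> N) :
  tterm R N -> tterm R N -> Prop :=
| teq_refl a : teq mul act a a
| teq_sym a b : teq mul act a b -> teq mul act b a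
| teq_trans a b c : teq mul act a b -> teq mul act b c -> teq mul act a c
| teq_add a a' b b' : teq mul act a a' -> teq mul act b b' ->
    teq mul act (TAdd a b) (TAdd a' b')
| teq_opp a a' : teq mul act a a' -> teq mul act (TOpp a) (TOpp a')
| teq_addA a b c : teq mul act (TAdd a (TAdd b c)) (TAdd (TAdd a b) c)
| teq_addC a b : teq mul act (TAdd a b) (TAdd b a)
| teq_add0 a : teq mul act (TAdd TZero a) a
| teq_addN a : teq mul act (TAdd (TOpp a) a) TZero
| teq_linl r r' n : teq mul act (TGen (r + r') n) (TAdd (TGen r n) (TGen r' n))
| teq_linr r n n' : teq mul act (TGen r (n + n')) (TAdd (TGen r n) (TGen r n'))
| teq_bal r s n : teq mul act (TGen (mul r s) n) (TGen r (act s n)).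

Fixpoint tmap (R L M : Type) (f : L -> M) (a : tterm R L) : tterm R M :=
  match a with
  | TZero => TZero
  | TGen r x => TGen r (f x)
  | TAdd a b => TAdd (tmap f a) (tmap f b)
  | TOpp a => TOpp (tmap f a)
  end.

Fixpoint tmul (R : zmodType) (mul : R -> R -> R) (a : tterm R R) : R :=
  match a with
  | TZero => 0
  | TGen r s => mul r s
  | TAdd a b => tmul mul a + tmul mul b
  | TOpp a => - tmul mul a
  end.

Definition t_unital (R : zmodType) (mul : R -> R -> R) : Prop :=
  (forall a b : tterm R R, tmul mul a = tmul mul b -> teq mul mul a b) /\
  (forall r : R, exists a, tmul mul a = r).

Definition tensor_iso (R L M : zmodType) (mul : R -> R -> R)
  (actL : R -> L -> L) (actM : R -> M -> M) (f : L -> M) : Prop :=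
  (forall a b : tterm R L, teq mul actM (tmap f a) (tmap f b) -> teq mul actL a b) /\
  (forall c : tterm R M, exists a, teq mul actM (tmap f a) c).

Definition hom_iso (R L M : zmodType) (mul : R -> R -> R)
  (actL : R -> L -> L) (actM : R -> M -> M) (f : L -> M) : Prop :=
  (forall g1 g2 : R -> L, lmod_hom mul actL g1 -> lmod_hom mul actL g2 ->
     (forall r, f (g1 r) = f (g2 r)) -> forall r, g1 r = g2 r) /\
  (forall h : R -> M, lmod_hom mul actM h ->
     exists g : R -> L, lmod_hom mul actL g /\ forall r, f (g r) = h r).

(* Since R ⊗_R R -> R is onto, every r is a finite sum Σ s_i t_i; we fix such a
   decomposition [tsplit r].  A null cokernel means t m = f (x) for some x, and a
   null kernel means that s x, and likewise s ⊗ x in R ⊗_R L, depend only on f x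
   (for s ⊗ k with f k = 0, write s ⊗ k = Σ s_i ⊗ t_i k = 0).  Hence
   r ⊗ m |-> Σ s_i ⊗ x_i with f x_i = t_i m is an inverse of R ⊗ f, well defined
   because, by injectivity of R ⊗_R R -> R, the decomposition of r is unique up
   to the tensor relations.  Likewise an R-linear h : R -> M lifts to
   r |-> Σ s_i x_i with f x_i = h t_i, and any two lifts g, g' agree since
   g r = Σ s_i g t_i depends only on the f (g t_i) = h t_i. *)
From mathcomp Require Import all_boot all_algebra.
From Stdlib Require Import Setoid Morphisms IndefiniteDescription.
Set Implicit Arguments. Unset Strict Implicit. Unset Printing Implicit Defensive.
Import GRing.Theory.
Local Open Scope ring_scope.

Section Additive.
Variables (U V : zmodType) (g : U -> V).
Hypothesis gD : {morph g : x y / x + y}.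

Lemma additive0 : g 0 = 0.
Proof. by apply/(addIr (g 0)); rewrite -gD !add0r. Qed.

Lemma additiveN : {morph g : x / - x}.
Proof. by move=> x; apply/(addIr (g x)); rewrite -gD !addNr additive0. Qed.

Lemma additiveB : {morph g : x y / x - y}.
Proof. by move=> x y; rewrite gD additiveN. Qed.

End Additive.

Fixpoint tgmap (A B C D : Type) (h : A -> B -> tterm C D) (u : tterm A B) :
    tterm C D :=
  match u with
  | TZero => TZero
  | TGen a b => h a b
  | TAdd u v => TAdd (tgmap h u) (tgmap h v)
  | TOpp u => TOpp (tgmap h u)
  end.

Fixpoint tfold (A B : Type) (V : zmodType) (h : A -> B -> V) (u : tterm A B) : V :=
  match u with
  | TZero => 0
  | TGen a b => h a b
  | TAdd u v => tfold h u + tfold h v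
  | TOpp u => - tfold h u
  end.

Add Parametric Relation (R N : zmodType) (mul : R -> R -> R) (act : R -> N -> N)
  : (tterm R N) (teq mul act)
  reflexivity proved by (@teq_refl R N mul act)
  symmetry proved by (@teq_sym R N mul act)
  transitivity proved by (@teq_trans R N mul act) as teq_rel.

#[local] Hint Resolve teq_refl : core.

Add Parametric Morphism (R N : zmodType) (mul : R -> R -> R) (act : R -> N -> N)
  : (@TAdd R N) with signature teq mul act ==> teq mul act ==> teq mul act
  as tadd_mor.
Proof. by move=> *; apply: teq_add. Qed.

Add Parametric Morphism (R N : zmodType) (mul : R -> R -> R) (act : R -> N -> N)
  : (@TOpp R N) with signature teq mul act ==> teq mul act as topp_mor.
Proof. by move=> *; apply: teq_opp. Qed.

Section TensorAlgebra.
Variables (R N : zmodType) (mul : R -> R -> R) (act : R -> N -> N).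
Local Notation "a ≡ b" := (teq mul act a b) (at level 70).
Implicit Types (a b c d x : tterm R N).

Lemma taddr0 a : TAdd a TZero ≡ a.
Proof. by rewrite (teq_addC mul act) (teq_add0 mul act). Qed.

Lemma taddrN a : TAdd a (TOpp a) ≡ TZero.
Proof. by rewrite (teq_addC mul act) (teq_addN mul act). Qed.

Lemma tadd_eq0 a x : TAdd a x ≡ TZero -> a ≡ TOpp x.
Proof.
move=> ax0; rewrite -(taddr0 a) -(taddrN x) (teq_addA mul act) ax0.
by rewrite (teq_add0 mul act).
Qed.

Lemma tadd_idr_eq0 a x : TAdd a x ≡ x -> a ≡ TZero.
Proof.
by move=> axx; rewrite -(taddr0 a) -(taddrN x) (teq_addA mul act) axx taddrN.
Qed.

Lemma topp0 : TOpp TZero ≡ TZero.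
Proof. by symmetry; apply: tadd_eq0; rewrite (teq_add0 mul act). Qed.

Lemma taddACA a b c d : TAdd (TAdd a b) (TAdd c d) ≡ TAdd (TAdd a c) (TAdd b d).
Proof.
rewrite -(teq_addA mul act a) -(teq_addA mul act a) (teq_addA mul act b).
by rewrite (teq_addC mul act b c) -(teq_addA mul act c).
Qed.

Lemma toppD a b : TOpp (TAdd a b) ≡ TAdd (TOpp a) (TOpp b).
Proof.
symmetry; apply: tadd_eq0.
by rewrite taddACA (teq_addN mul act a) (teq_addN mul act b) (teq_add0 mul act).
Qed.

Lemma tgen0l n : TGen 0 n ≡ TZero.
Proof.
by apply: (@tadd_idr_eq0 _ (TGen 0 n)); rewrite -(teq_linl mul act) addr0.
Qed.

Lemma tgen0r r : TGen r 0 ≡ TZero.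
Proof.
by apply: (@tadd_idr_eq0 _ (TGen r 0)); rewrite -(teq_linr mul act) addr0.
Qed.

Lemma tgenNl r n : TGen (- r) n ≡ TOpp (TGen r n).
Proof. by apply: tadd_eq0; rewrite -(teq_linl mul act) addNr tgen0l. Qed.

Lemma tgen_tmul u n :
  TGen (tmul mul u) n ≡ tgmap (fun s t => TGen s (act t n)) u.
Proof.
elim: u => /= [|s t|u IHu v IHv|u IHu].
- exact: tgen0l.
- exact: teq_bal.
- by rewrite (teq_linl mul act) IHu IHv.
- by rewrite tgenNl IHu.
Qed.

End TensorAlgebra.

Lemma tgmap_comp (A B C D E F : Type) (h : A -> B -> tterm C D)
    (k : C -> D -> tterm E F) u :
  tgmap k (tgmap h u) = tgmap (fun a b => tgmap k (h a b)) u.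
Proof. by elim: u => //= [u -> v ->|u ->]. Qed.

Lemma tgmap_id (A B : Type) (u : tterm A B) : tgmap (@TGen A B) u = u.
Proof. by elim: u => //= [u -> v ->|u ->]. Qed.

Lemma tmapE (A B C : Type) (f : B -> C) (u : tterm A B) :
  tmap f u = tgmap (fun a b => TGen a (f b)) u.
Proof. by elim: u => //= [u -> v ->|u ->]. Qed.

Section TermMaps.
Variables (R N : zmodType) (mul : R -> R -> R) (act : R -> N -> N).
Variables (C D : zmodType) (mul' : C -> C -> C) (act' : C -> D -> D).
Local Notation "a ≡ b" := (teq mul' act' a b) (at level 70).
Implicit Types (h : R -> N -> tterm C D) (u : tterm R N).

Lemma tgmap_ext h h' u : (forall r n, h r n ≡ h' r n) -> tgmap h u ≡ tgmap h' u.
Proof.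
by move=> hh'; elim: u => /= [|r n|u IHu v IHv|u IHu]; rewrite ?hh' ?IHu ?IHv.
Qed.

Lemma tgmap0 u : tgmap (fun _ _ => TZero) u ≡ TZero.
Proof.
elim: u => /= [|r n|u IHu v IHv|u IHu] //.
- by rewrite IHu IHv (teq_add0 mul' act').
- by rewrite IHu topp0.
Qed.

Lemma tgmapD h h1 h2 u : (forall r n, h r n ≡ TAdd (h1 r n) (h2 r n)) ->
  tgmap h u ≡ TAdd (tgmap h1 u) (tgmap h2 u).
Proof.
move=> hD; elim: u => /= [|r n|u IHu v IHv|u IHu] //.
- by rewrite (teq_add0 mul' act').
- by rewrite IHu IHv taddACA.
- by rewrite IHu toppD.
Qed.

Lemma tgmap_teq h :
    (forall r r' n, h (r + r') n ≡ TAdd (h r n) (h r' n)) ->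
    (forall r n n', h r (n + n') ≡ TAdd (h r n) (h r n')) ->
    (forall r s n, h (mul r s) n ≡ h r (act s n)) ->
  forall u v, teq mul act u v -> tgmap h u ≡ tgmap h v.
Proof.
move=> hDl hDr hbal u v; elim=> /= [a|a b _ ->|a b c _ -> _ ->|a a' b b' _ -> _ ->|
  a a' _ ->|a b c|a b|a|a|r r' n|r n n'|r s n] //.
- exact: teq_addA.
- exact: teq_addC.
- exact: teq_add0.
- exact: teq_addN.
Qed.

End TermMaps.

Section Fold.
Variables (A B : Type) (V W : zmodType).
Implicit Types (h : A -> B -> V) (u : tterm A B).

Lemma eq_tfold h h' : h =2 h' -> tfold h =1 tfold h'.
Proof. by move=> hh'; elim=> /= [|a b|u -> v ->|u ->]. Qed.

Lemma tfold_additive (g : V -> W) h : {morph g : x y / x + y} ->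
  forall u, g (tfold h u) = tfold (fun a b => g (h a b)) u.
Proof.
move=> gD; elim=> /= [|a b|u <- v <-|u <-] //.
- exact: additive0.
- exact: additiveN.
Qed.

Lemma tfold_tgmap (C D : Type) (k : A -> B -> tterm C D) (h : C -> D -> V) u :
  tfold h (tgmap k u) = tfold (fun a b => tfold h (k a b)) u.
Proof. by elim: u => //= [u -> v ->|u ->]. Qed.

End Fold.

Lemma tmulE (R : zmodType) (mul : R -> R -> R) : tmul mul =1 tfold mul.
Proof. by elim=> //= [u -> v ->|u ->]. Qed.

Lemma tfold_teq (R N V : zmodType) (mul : R -> R -> R) (act : R -> N -> N)
    (h : R -> N -> V) :
    (forall r r' n, h (r + r') n = h r n + h r' n) ->
    (forall r n n', h r (n + n') = h r n + h r n') ->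
    (forall r s n, h (mul r s) n = h r (act s n)) ->
  forall u v, teq mul act u v -> tfold h u = tfold h v.
Proof.
move=> hDl hDr hbal u v; elim=> /= [a|a b _ ->|a b c _ -> _ ->|a a' b b' _ -> _ ->|
  a a' _ ->|a b c|a b|a|a|r r' n|r n n'|r s n] //.
- exact: addrA.
- exact: addrC.
- exact: add0r.
- exact: addNr.
Qed.

Lemma hom_tmul (R N : zmodType) (mul : R -> R -> R) (act : R -> N -> N)
    (g : R -> N) :
  lmod_hom mul act g -> forall u, g (tmul mul u) = tfold (fun a b => act a (g b)) u.
Proof.
by move=> [gD gL] u; rewrite tmulE (tfold_additive _ gD); apply: eq_tfold.
Qed.

Section RingProducts.
Variables (R : zmodType) (mul : R -> R -> R).
Hypotheses (mulA : forall a b c, mul a (mul b c) = mul (mul a b) c)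
  (mulDl : forall a b c, mul (a + b) c = mul a c + mul b c)
  (mulDr : forall a b c, mul a (b + c) = mul a b + mul a c).

Lemma tmul_mulr s u :
  tmul mul (tgmap (fun a b => TGen a (mul b s)) u) = mul (tmul mul u) s.
Proof.
rewrite !tmulE tfold_tgmap (tfold_additive _ (fun x y => mulDl x y s)).
by apply: eq_tfold => a b /=; apply: mulA.
Qed.

Lemma tmul_mull r u :
  tmul mul (tgmap (fun a b => TGen (mul r a) b) u) = mul r (tmul mul u).
Proof.
rewrite !tmulE tfold_tgmap (tfold_additive _ (mulDr r)).
by apply: eq_tfold => a b /=; rewrite mulA.
Qed.

End RingProducts.

Section IdempotentRing.
Variables (R : zmodType) (mul : R -> R -> R).
Hypothesis tmul_surj : forall r : R, exists u, tmul mul u = r.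

Definition tsplit (r : R) : tterm R R :=
  proj1_sig (constructive_indefinite_description _ (tmul_surj r)).

Lemma tsplitK r : tmul mul (tsplit r) = r.
Proof. by rewrite /tsplit; case: constructive_indefinite_description. Qed.

Lemma tgen_annihilated (N : zmodType) (act : R -> N -> N) (k : N) :
  (forall s, act s k = 0) -> forall r, teq mul act (TGen r k) TZero.
Proof.
move=> Rk0 r; rewrite -(tsplitK r) tgen_tmul -(tgmap0 mul act (tsplit r)).
by apply: tgmap_ext => s t; rewrite Rk0 tgen0r.
Qed.

End IdempotentRing.

Section NullKernelCokernel.
Variables (R : zmodType) (mul : R -> R -> R).
Hypotheses (mulA : forall a b c, mul a (mul b c) = mul (mul a b) c)
  (mulDl : forall a b c, mul (a + b) c = mul a c + mul b c)
  (mulDr : forall a b c, mul a (b + c) = mul a b + mul a c)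
  (tmul_inj : forall u v, tmul mul u = tmul mul v -> teq mul mul u v)
  (tmul_surj : forall r : R, exists u, tmul mul u = r).
Variables (L M : zmodType) (actL : R -> L -> L) (actM : R -> M -> M).
Hypotheses (actLD : forall r, {morph actL r : x y / x + y})
  (actLDl : forall r r' x, actL (r + r') x = actL r x + actL r' x)
  (actLA : forall r s x, actL (mul r s) x = actL r (actL s x))
  (actMD : forall r, {morph actM r : x y / x + y})
  (actMDl : forall r r' m, actM (r + r') m = actM r m + actM r' m)
  (actMA : forall r s m, actM (mul r s) m = actM r (actM s m)).
Variable f : L -> M.
Hypotheses (fD : {morph f : x y / x + y})
  (fL : forall r x, f (actL r x) = actM r (f x))
  (ker_null : null_kernel actL f) (coker_null : null_cokernel actM f).

Local Notation tsplit := (tsplit tmul_surj).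
Local Notation tsplitK := (tsplitK tmul_surj).
Local Notation "a ≡ b" := (teq mul actL a b) (at level 70).

Lemma act_ker s x y : f x = f y -> actL s x = actL s y.
Proof.
move=> fxy; apply/eqP; rewrite -subr_eq0 -additiveB //; apply/eqP/ker_null.
by rewrite additiveB // fxy subrr.
Qed.

Lemma tgen_ker s x y : f x = f y -> TGen s x ≡ TGen s y.
Proof.
move=> fxy; have fxy0 : f (x - y) = 0 by rewrite additiveB // fxy subrr.
rewrite -(subrK y x) (teq_linr mul actL).
rewrite (tgen_annihilated tmul_surj (fun r => ker_null r fxy0)).
exact: teq_add0.
Qed.

Definition coker_lift t m : L :=
  proj1_sig (constructive_indefinite_description _ (coker_null t m)).

Lemma coker_liftP t m : f (coker_lift t m) = actM t m.
Proof. by rewrite /coker_lift; case: constructive_indefinite_description. Qed.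

Definition tlift m (u : tterm R R) : tterm R L :=
  tgmap (fun s t => TGen s (coker_lift t m)) u.

Lemma tlift_teq m u v : teq mul mul u v -> tlift m u ≡ tlift m v.
Proof.
apply: tgmap_teq => [r r' t|r t t'|r s t]; first exact: teq_linl.
  rewrite -(teq_linr mul actL); apply: tgen_ker.
  by rewrite fD !coker_liftP actMDl.
rewrite (teq_bal mul actL); apply: tgen_ker.
by rewrite fL !coker_liftP actMA.
Qed.

Lemma tlift_tmul m u v : tmul mul u = tmul mul v -> tlift m u ≡ tlift m v.
Proof. by move/tmul_inj; apply: tlift_teq. Qed.

Lemma tliftD m m' u : tlift (m + m') u ≡ TAdd (tlift m u) (tlift m' u).
Proof.
apply: tgmapD => s t; rewrite -(teq_linr mul actL); apply: tgen_ker.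
by rewrite fD !coker_liftP actMD.
Qed.

Lemma tlift_mulr m s u :
  tlift m (tgmap (fun a b => TGen a (mul b s)) u) ≡ tlift (actM s m) u.
Proof.
rewrite /tlift tgmap_comp; apply: tgmap_ext => a b /=; apply: tgen_ker.
by rewrite !coker_liftP actMA.
Qed.

Lemma tmap_tlift m u : teq mul actM (tmap f (tlift m u)) (TGen (tmul mul u) m).
Proof.
rewrite tgen_tmul tmapE tgmap_comp; apply: tgmap_ext => s t /=.
by rewrite coker_liftP.
Qed.

Lemma tlift_tmap x u : tlift (f x) u ≡ TGen (tmul mul u) x.
Proof.
rewrite tgen_tmul; apply: tgmap_ext => s t; apply: tgen_ker.
by rewrite coker_liftP fL.
Qed.

Definition tensor_inv (c : tterm R M) : tterm R L :=
  tgmap (fun r m => tlift m (tsplit r)) c.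

Lemma tensor_inv_teq c c' : teq mul actM c c' -> tensor_inv c ≡ tensor_inv c'.
Proof.
apply: tgmap_teq => [r r' m|r m m'|r s m]; last 2 first.
- exact: tliftD.
- rewrite -tlift_mulr; apply: tlift_tmul.
  by rewrite tmul_mulr // !tsplitK.
by apply: (@tlift_tmul m _ (TAdd (tsplit r) (tsplit r'))); rewrite /= !tsplitK.
Qed.

Lemma tmap_tensor_inv c : teq mul actM (tmap f (tensor_inv c)) c.
Proof.
rewrite tmapE tgmap_comp -[X in teq _ _ _ X]tgmap_id.
by apply: tgmap_ext => r m; rewrite -tmapE tmap_tlift tsplitK.
Qed.

Lemma tensor_inv_tmap a : tensor_inv (tmap f a) ≡ a.
Proof.
rewrite /tensor_inv tmapE tgmap_comp -[X in _ ≡ X]tgmap_id.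
by apply: tgmap_ext => r x /=; rewrite tlift_tmap tsplitK.
Qed.

Lemma tensor_iso_of_null : tensor_iso mul actL actM f.
Proof.
split=> [a b fab|c]; last by exists (tensor_inv c); apply: tmap_tensor_inv.
by rewrite -(tensor_inv_tmap a) -(tensor_inv_tmap b); apply: tensor_inv_teq.
Qed.

Section HomLift.
Variable h : R -> M.
Hypothesis h_hom : lmod_hom mul actM h.

Lemma hom_liftable t : exists x, f x = h t.
Proof.
rewrite -(tsplitK t) (hom_tmul h_hom).
elim: (tsplit t) => /= [|a b|u [x <-] v [y <-]|u [x <-]].
- by exists 0; apply: additive0.
- exact: coker_null.
- by exists (x + y); rewrite fD.
- by exists (- x); apply: additiveN.
Qed.

Definition hom_lift t : L :=
  proj1_sig (constructive_indefinite_description _ (hom_liftable t)).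

Lemma hom_liftP t : f (hom_lift t) = h t.
Proof. by rewrite /hom_lift; case: constructive_indefinite_description. Qed.

Definition hom_preimage (r : R) : L :=
  tfold (fun s t => actL s (hom_lift t)) (tsplit r).

Lemma hom_preimage_tmul u :
  hom_preimage (tmul mul u) = tfold (fun s t => actL s (hom_lift t)) u.
Proof.
have [hD hL] := h_hom.
apply: tfold_teq (tmul_inj (tsplitK (tmul mul u))) => [s s' t|s t t'|r s t].
- exact: actLDl.
- by rewrite -actLD; apply: act_ker; rewrite fD !hom_liftP hD.
- by rewrite actLA; apply: act_ker; rewrite fL !hom_liftP hL.
Qed.

Lemma hom_preimage_hom : lmod_hom mul actL hom_preimage.
Proof.
split=> [x y|r x].
  have -> : x + y = tmul mul (TAdd (tsplit x) (tsplit y)) by rewrite /= !tsplitK.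
  exact: hom_preimage_tmul.
rewrite -{1}(tsplitK x) -tmul_mull // hom_preimage_tmul tfold_tgmap.
rewrite /hom_preimage (tfold_additive _ (actLD r)).
by apply: eq_tfold => a b /=; apply: actLA.
Qed.

Lemma f_hom_preimage r : f (hom_preimage r) = h r.
Proof.
rewrite /hom_preimage (tfold_additive _ fD) -{2}(tsplitK r) (hom_tmul h_hom).
by apply: eq_tfold => s t; rewrite fL hom_liftP.
Qed.

End HomLift.

Lemma hom_iso_of_null : hom_iso mul actL actM f.
Proof.
split=> [g1 g2 g1_hom g2_hom fg12 r|h h_hom].
  rewrite -(tsplitK r) (hom_tmul g1_hom) (hom_tmul g2_hom).
  by apply: eq_tfold => s t; apply: act_ker.
exists (hom_preimage h_hom).
by split; [apply: hom_preimage_hom | apply: f_hom_preimage].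
Qed.

End NullKernelCokernel.

Theorem proposition5p6 (R : zmodType) (mul : R -> R -> R)
  (L M : zmodType) (actL : R -> L -> L) (actM : R -> M -> M) (f : L -> M) :
  nu_ring mul -> t_unital mul ->
  lmodule mul actL -> lmodule mul actM ->
  lmod_hom actL actM f ->
  null_kernel actL f -> null_cokernel actM f ->
  tensor_iso mul actL actM f /\ hom_iso mul actL actM f.
Proof.
move=> [mulA mulDl mulDr] [tmul_inj tmul_surj] [actLD actLDl actLA]
  [actMD actMDl actMA] [fD fL] ker_null coker_null.
split; [exact: tensor_iso_of_null | exact: hom_iso_of_null].
Qed.
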